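(* Let $q$ be a prime power, let $r$ be an odd prime not dividing $q$ such that the multiplicative order of $q$ modulo $r$ is $r-1$. Let $n>1$ with $\gcd(n,r-1)=1$, and let $f(x)$ be a monic irreducible polynomial of degree $n$ over $\mathbb{F}_q$ of order $t$. Let $R(x)\in\mathbb{F}_q[x]$ be the remainder of $x^r$ modulo $f(x)$, i.e. $x^r\equiv R(x)\pmod{f(x)}$, and let $\psi(x)=\sum_{u=0}^{n}\psi_u x^u\in\mathbb{F}_q[x]$ be the monic nonzero polynomial of least degree such that $$\sum_{u=0}^{n}\psi_u\,(R(x))^u\equiv 0\pmod{f(x)}.$$ Then $\psi(x)$ is an irreducible polynomial of degree $n$ over $\mathbb{F}_q$, and $$F(x)=\frac{\psi(x^r)}{f(x)}$$ is an irreducible polynomial of degree $(r-1)n$ over $\mathbb{F}_q$ whose order is $rt$.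
   Context: The order of a polynomial $P(x)\in\mathbb{F}_q[x]$ with $P(0)\neq0$ is the least positive integer $e$ such that $P(x)$ divides $x^e-1$; for an irreducible $P$ it equals the multiplicative order of any of its roots. *)

From HB Require Import structures.
From mathcomp Require Import all_boot all_order all_algebra all_field.
Set Implicit Arguments. Unset Strict Implicit. Unset Printing Implicit Defensive.
Import GRing.Theory.
Local Open Scope ring_scope.

Definition is_mult_order_mod (q r e : nat) : Prop :=
  (0 < e)%N /\ (q ^ e = 1 %[mod r])%N /\
  (forall k : nat, (0 < k)%N -> (q ^ k = 1 %[mod r])%N -> (e <= k)%N).

Definition is_poly_order (F : fieldType) (P : {poly F}) (e : nat) : Prop :=
  (0 < e)%N /\ P %| 'X^e - 1 /\
  (forall k : nat, (0 < k)%N -> P %| 'X^k - 1 -> (e <= k)%N).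

(* Let a be a root of f; it lives in the stem field F_q(a) = F_{q^n} and has
   multiplicative order t.  Since q has order r - 1 modulo r and n is prime to
   r - 1, r does not divide q^n - 1, hence r is prime to t: b = a^r again has
   order t and a is a power of b.  The polynomial psi is the minimal polynomial
   of b, so it is irreducible of degree n, and psi(x^r) vanishes at a.
   Let c be a root of an irreducible factor h of G = psi(x^r) / f (the F of the
   statement).  Then c^r is a conjugate of b, so it has order t.  If c had
   order t as well, c would be the same power of c^r as a is of b, hence a root
   of f; but f does not divide G because psi is separable.  So c has order rt,
   which divides q^(deg h) - 1; this forces r - 1 and n, hence (r - 1) n =
   deg G, to divide deg h.  Thus G is irreducible, and its order is the order
   rt of its roots. *)

From HB Require Import structures.
From mathcomp Require Import all_boot all_order all_algebra all_field zify.
From Stdlib Require Import Classical.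
Set Implicit Arguments. Unset Strict Implicit. Unset Printing Implicit Defensive.
Import GRing.Theory.
Local Open Scope ring_scope.
Local Notation "p ^ f" := (map_poly f p) : ring_scope.

Lemma mult_order_mod_dvdn (q r e k : nat) :
  is_mult_order_mod q r e -> (q ^ k = 1 %[mod r])%N -> (e %| k)%N.
Proof.
move=> [e_gt0 [qe1 e_min]] qk1; apply: contraT; rewrite -lt0n => km_gt0.
suff: (e <= k %% e)%N by rewrite leqNgt ltn_mod e_gt0.
apply: e_min => //; move: qk1.
rewrite {1}(divn_eq k e) mulnC expnD expnM -modnMml -modnXm qe1.
by rewrite modnXm exp1n modnMml mul1n.
Qed.

Lemma coprime_modn_inv (r t : nat) :
  (0 < r)%N -> coprime r t -> exists s, (r * s = 1 %[mod t])%N.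
Proof.
move=> r_gt0 co_rt; case: (egcdnP t r_gt0) => s k def_rs _.
by exists s; rewrite mulnC def_rs (eqP co_rt) modnMDl.
Qed.

Lemma dvdn_pred_eqmod x r : (0 < x)%N -> (r %| x.-1)%N = (x == 1 %[mod r])%N.
Proof. by move=> x_gt0; rewrite eqn_mod_dvd // subn1. Qed.

Section PrimitiveRoots.

Variable R : nzRingType.
Implicit Types z : R.

Lemma prim_root_order_inj m n z :
  m.-primitive_root z -> n.-primitive_root z -> m = n.
Proof.
move=> prim_m prim_n; apply/eqP; rewrite eqn_dvd.
by rewrite (prim_order_dvd prim_m) (prim_order_dvd prim_n) !prim_expr_order ?eqxx.
Qed.

Lemma eq_prim_root_of_unity (S : nzRingType) n z (w : S) :
  (forall k, (z ^+ k == 1) = (w ^+ k == 1)) ->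
  n.-primitive_root z = n.-primitive_root w.
Proof.
by move=> zw; congr andb; apply: eq_forallb => i; rewrite !unity_rootE zw.
Qed.

Lemma expr_modn_inv z t r s :
  z ^+ t = 1 -> (r * s = 1 %[mod t])%N -> (z ^+ r) ^+ s = z.
Proof. by move=> zt1 rs1; rewrite -exprM -(expr_mod _ zt1) rs1 expr_mod ?expr1. Qed.

End PrimitiveRoots.

Lemma root_map_comp_Xn (F : nzRingType) (L : comNzRingType)
    (io : {rmorphism F -> L}) (p : {poly F}) k w :
  root ((p \Po 'X^k) ^ io) w = root (p ^ io) (w ^+ k).
Proof. by rewrite map_comp_poly map_polyXn /root horner_comp hornerXn. Qed.

Lemma root_map_Xn_sub1 (F L : nzRingType) (io : {rmorphism F -> L}) k w :
  root (('X^k - 1) ^ io) w = (w ^+ k == 1).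
Proof.
by rewrite rmorphB /= map_polyXn rmorph1 /root hornerD hornerN hornerXn hornerC subr_eq0.
Qed.

Lemma map_poly_Xn_subX (F L : nzRingType) (io : {rmorphism F -> L}) N :
  ('X^N - 'X) ^ io = 'X^N - 'X.
Proof. by rewrite rmorphB /= map_polyXn map_polyX. Qed.

Lemma dvdp_deriv_sq (R : fieldType) (p g : {poly R}) : (p * p) %| g -> p %| g^`().
Proof.
move=> /dvdpP [u ->]; rewrite !derivM mulrA.
apply: dvdp_add; first exact: dvdp_mull (dvdpp p).
apply/dvdp_mull/dvdp_add; [exact: dvdp_mull (dvdpp p) | exact: dvdp_mulr (dvdpp p)].
Qed.

Lemma root_irreducible_dvdp (F K : fieldType) (iota : {rmorphism F -> K})
    (h p : {poly F}) (w : K) :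
  irreducible_poly h -> root (h ^ iota) w -> root (p ^ iota) w = (h %| p).
Proof.
move=> h_irr hw; apply/idP/idP => [pw | /dvdpP [u ->]]; last first.
  by rewrite rmorphM rootM hw orbT.
apply: contraT => h_ndvd_p.
have /eqP size_gcd : coprimep h p by rewrite irreducible_poly_coprime.
have gcd_neq0 : (gcdp h p) ^ iota != 0.
  by rewrite map_poly_eq0 gcdp_eq0 negb_and irredp_neq0.
have := @root_size_gt1 _ w _ gcd_neq0; rewrite size_map_poly size_gcd ltnn.
by rewrite gcdp_map root_gcd hw pw => /(_ isT).
Qed.

Lemma irreducible_factor (F : fieldType) (g : {poly F}) :
  (1 < size g)%N -> exists2 h, irreducible_poly h & h %| g.
Proof.
have [N] := ubnP (size g); elim: N g => // N IH g.
rewrite ltnS => g_le_N g_gt1.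
have [g_irr | g_red] := classic (irreducible_poly g); first by exists g.
have [d [d_size d_dvd d_neqp]] :
    exists d : {poly F}, [/\ size d != 1%N, d %| g & ~ d %= g].
  apply: NNPP => no_d; apply: g_red; split=> // d d_size d_dvd.
  by apply: NNPP => d_neqp; apply: no_d; exists d.
have g_neq0 : g != 0 by rewrite -size_poly_gt0 ltnW.
have d_lt_g : (size d < size g)%N.
  rewrite ltn_neqAle dvdp_leq // andbT.
  by apply: contra_notN d_neqp; rewrite dvdp_size_eqp.
have d_gt1 : (1 < size d)%N.
  rewrite ltn_neqAle eq_sym d_size size_poly_gt0.
  by apply: contraTneq d_dvd => ->; rewrite dvd0p.
have [h h_irr h_dvd] := IH d (leq_trans d_lt_g g_le_N) d_gt1.
by exists h; last exact: dvdp_trans d_dvd.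
Qed.

Lemma expf_card_pow (F : finFieldType) (c : F) m : c ^+ (#|F| ^ m) = c.
Proof. by elim: m => [|m IHm]; rewrite ?expr1 // expnSr exprM IHm expf_card. Qed.

Lemma expf_card_pred (K : finFieldType) (y : K) : y != 0 -> y ^+ #|K|.-1 = 1.
Proof.
move=> y_neq0; apply: (mulIf y_neq0).
by rewrite mul1r -exprSr prednK ?expf_card // ltnW // finNzRing_gt1.
Qed.

Lemma natf_neq0_card (F : finFieldType) r :
  prime r -> ~~ (r %| #|F|)%N -> (r%:R : F) != 0.
Proof.
move=> r_prime r_ndvd_q; have [p p_prime pcharFp] := finPcharP F.
rewrite -(dvdn_pcharf pcharFp) (dvdn_prime2 p_prime r_prime).
apply: contra r_ndvd_q => /eqP <-.
case: (logn _ _) (card_pprimeChar pcharFp) => [|k] card_F.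
  by have := finNzRing_gt1 F; rewrite card_F.
by rewrite card_F expnS dvdn_mulr.
Qed.

Lemma frobenius_powD (F K : finFieldType) (iota : {rmorphism F -> K}) m (y z : K) :
  (y + z) ^+ (#|F| ^ m) = y ^+ (#|F| ^ m) + z ^+ (#|F| ^ m).
Proof.
have [p p_pr pcharFp] := finPcharP F.
apply: exprDn_pchar; rewrite (card_pprimeChar pcharFp) -expnM pnatX.
by rewrite (pnatE _ p_pr) (rmorph_pchar iota pcharFp).
Qed.

Section StemField.

Variable F : finFieldType.
Local Notation q := #|F|.

Definition stem_field (K : finFieldType) (iota : {rmorphism F -> K}) (x : K)
    (h : {poly F}) :=
  [/\ #|K| = (q ^ (size h).-1)%N,
      forall p, root (p ^ iota) x = (h %| p)
    & forall y : K, exists p, y = (p ^ iota).[x]].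

Lemma stem_field_exists (h : {poly F}) : irreducible_poly h ->
  exists (K : finFieldType) (iota : {rmorphism F -> K}) (x : K), stem_field iota x h.
Proof.
move=> h_irr; have h_neq0 := irredp_neq0 h_irr.
pose hM := (lead_coef h)^-1 *: h.
have hM_h : hM %= h by rewrite eqp_scale ?invr_eq0 ?lead_coef_eq0.
have hM_mi : monic_irreducible_poly hM.
  split; last by rewrite monicE lead_coefZ mulVf ?lead_coef_eq0.
  split=> [|d d_size]; first by rewrite (eqp_size hM_h); case: h_irr.
  rewrite (eqp_dvdr _ hM_h) => /(h_irr _ d_size) /eqp_trans; apply.
  by rewrite eqp_sym.
pose K := {poly %/ hM with hM_mi}.
pose iota : {rmorphism F -> K} := qfpoly_const hM_mi.
have hornerX p : (p ^ iota).[qpolyX hM : K] = in_qpoly hM p.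
  by rewrite -[in RHS](comp_polyXr p) in_qpoly_comp_horner.
exists K, iota, (qpolyX hM : K); split.
- by rewrite card_qfpoly (eqp_size hM_h).
- move=> p; rewrite /root hornerX -(eqp_dvdl _ hM_h).
  have hM_monic : hM \is monic := hM_mi.2.
  apply/eqP/idP => [/val_eqP /= | hM_dvd_p].
    by rewrite -Pdiv.IdomainMonic.modpE mk_monicE.
  by apply/val_eqP; rewrite /= -Pdiv.IdomainMonic.modpE mk_monicE.
- move=> y; exists (y : {poly F}); rewrite hornerX; apply: val_inj => /=.
  by rewrite Pdiv.Ring.rmodp_small //; apply: size_mk_monic.
Qed.

Section OneStemField.

Variables (K : finFieldType) (iota : {rmorphism F -> K}) (x : K) (h : {poly F}).
Hypothesis stem : stem_field iota x h.
Local Notation d := (size h).-1.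

Lemma stem_field_dvdp_Xn_subX : h %| 'X^(q ^ d) - 'X.
Proof.
have [card_K root_K _] := stem.
by rewrite -root_K map_poly_Xn_subX /root !hornerE -card_K expf_card subrr.
Qed.

Lemma stem_field_root_frobenius (L : fieldType) (io : {rmorphism F -> L}) w :
  root (h ^ io) w -> w ^+ (q ^ d) = w.
Proof.
move=> hw; have /dvdpP [u def_P] := stem_field_dvdp_Xn_subX.
have : root (('X^(q ^ d) - 'X) ^ io) w by rewrite def_P rmorphM rootM hw orbT.
by rewrite map_poly_Xn_subX /root !hornerE subr_eq0 => /eqP.
Qed.

Lemma stem_field_frobenius_fixed m :
  x ^+ (q ^ m) = x -> forall y : K, y ^+ (q ^ m) = y.
Proof.
have [_ _ gen_K] := stem; move=> xm y; have [p ->] := gen_K y.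
elim/poly_ind: p => [|p c IHp].
  by rewrite map_poly0 horner0 expr0n expn_eq0 gtn_eqF // ltnW // finNzRing_gt1.
rewrite rmorphD rmorphM /= map_polyX map_polyC /= hornerMXaddC.
by rewrite (frobenius_powD iota) exprMn IHp xm -rmorphXn /= expf_card_pow.
Qed.

Lemma stem_field_frobenius_deg m : (0 < m)%N -> x ^+ (q ^ m) = x -> (d <= m)%N.
Proof.
move=> m_gt0 /stem_field_frobenius_fixed fixed; have [card_K _ _] := stem.
have q_gt1 := finNzRing_gt1 F.
pose P : {poly K} := 'X^(q ^ m) - 'X.
have size_P : size P = (q ^ m).+1.
  rewrite size_polyDl ?size_polyXn // size_polyN size_polyX ltnS.
  by rewrite (leq_trans q_gt1) // -{1}(expn1 q) leq_pexp2l // ltnW.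
have P_neq0 : P != 0 by rewrite -size_poly_eq0 size_P.
have roots_P : all (root P) (enum K).
  by apply/allP => y _; rewrite /root !hornerE fixed subrr.
have := max_poly_roots P_neq0 roots_P (enum_uniq K).
by rewrite size_P -cardE card_K ltnS leq_exp2l.
Qed.

Lemma stem_field_deg_gt0 : (0 < d)%N.
Proof.
have [card_K _ _] := stem; have := finNzRing_gt1 K.
by rewrite card_K lt0n; apply: contraTneq => ->.
Qed.

Lemma stem_field_frobenius_dvd m : (0 < m)%N -> x ^+ (q ^ m) = x -> (d %| m)%N.
Proof.
have [card_K _ _] := stem.
have iter_fixed j k : x ^+ (q ^ j) = x -> x ^+ (q ^ (j * k)) = x.
  by move=> xj; elim: k => [|k IHk]; rewrite ?muln0 ?expr1 // mulnS expnD exprM xj IHk.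
move=> m_gt0 xm; have xd : x ^+ (q ^ d) = x by rewrite -card_K expf_card.
have [a _ dvd_m] := Bezoutl d m_gt0.
have xg : x ^+ (q ^ gcdn m d) = x.
  have := iter_fixed _ ((gcdn m d + a * d) %/ m)%N xm.
  by rewrite mulnC divnK // expnD mulnC exprM mulnC iter_fixed.
have g_gt0 : (0 < gcdn m d)%N by rewrite gcdn_gt0 m_gt0.
apply/gcdn_idPr/eqP; rewrite eqn_leq stem_field_frobenius_deg // andbT.
by rewrite dvdn_leq ?dvdn_gcdr ?stem_field_deg_gt0.
Qed.

Lemma stem_field_poly_order m : is_poly_order h m <-> m.-primitive_root x.
Proof.
have [_ root_K _] := stem.
have dvd_Xn_sub1 k : (h %| 'X^k - 1) = (x ^+ k == 1).
  by rewrite -root_K root_map_Xn_sub1.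
split=> [[m_gt0 [h_dvd h_min]] | prim_x].
  rewrite dvd_Xn_sub1 in h_dvd.
  have [k prim_k k_dvd_m] := prim_order_exists m_gt0 (eqP h_dvd).
  have m_le_k : (m <= k)%N.
    apply: h_min; first exact: prim_order_gt0 prim_k.
    by rewrite dvd_Xn_sub1 (prim_expr_order prim_k).
  suff -> : m = k by [].
  by apply/eqP; rewrite eqn_leq m_le_k dvdn_leq.
split; first exact: prim_order_gt0 prim_x.
split=> [|k k_gt0]; first by rewrite dvd_Xn_sub1 (prim_expr_order prim_x).
by rewrite dvd_Xn_sub1 -(prim_order_dvd prim_x); apply: dvdn_leq.
Qed.

End OneStemField.

Lemma irreducible_separable (h : {poly F}) : irreducible_poly h -> separable_poly h.
Proof.
move=> h_irr; have [K [iota [x stem]]] := stem_field_exists h_irr.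
apply: dvdp_separable (stem_field_dvdp_Xn_subX stem) _.
have [card_K _ _] := stem.
rewrite -(separable_map iota) map_poly_Xn_subX -card_K finField_genPoly.
by rewrite separable_prod_XsubC index_enum_uniq.
Qed.

End StemField.

Section Theorem5.

Variables (F : finFieldType) (r n t : nat) (f psi : {poly F}).
Local Notation q := #|F|.

Hypotheses (r_prime : prime r) (r_odd : odd r) (r_ndvd_q : ~~ (r %| q)%N).
Hypotheses (ord_q : is_mult_order_mod q r r.-1) (n_gt1 : (1 < n)%N).
Hypotheses (co_n_r1 : coprime n r.-1) (f_irr : irreducible_poly f).
Hypotheses (size_f : size f = n.+1) (ord_f : is_poly_order f t).

Variables (K : finFieldType) (iota : {rmorphism F -> K}) (a : K).
Hypothesis stem_f : stem_field iota a f.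

Local Notation b := (a ^+ r).

Hypotheses (psi_monic : psi \is monic) (size_psi_le : (size psi <= n.+1)%N).
Hypothesis psi_f : f %| psi \Po ('X^r %% f).
Hypothesis psi_min : forall phi : {poly F}, phi \is monic -> (size phi <= n.+1)%N ->
  f %| phi \Po ('X^r %% f) -> (size psi <= size phi)%N.

Let r_gt0 : (0 < r)%N := prime_gt0 r_prime.
Let q_gt0 : (0 < q)%N := ltnW (finNzRing_gt1 F).

Lemma a_prim : t.-primitive_root a.
Proof. exact/(stem_field_poly_order stem_f). Qed.

Lemma a_neq0 : a != 0.
Proof. by rewrite (prim_root_eq0 a_prim) -lt0n (prim_order_gt0 a_prim). Qed.

Lemma card_stem_f : #|K| = (q ^ n)%N.
Proof. by have [-> _ _] := stem_f; rewrite size_f. Qed.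

Lemma r_ndvd_pred_qn : ~~ (r %| (q ^ n).-1)%N.
Proof.
rewrite dvdn_pred_eqmod ?expn_gt0 ?q_gt0 //.
apply/negP => /eqP /(mult_order_mod_dvdn ord_q) r1_dvd_n.
have : (r.-1 %| 1)%N by rewrite -(eqP co_n_r1) dvdn_gcd r1_dvd_n dvdnn.
by rewrite dvdn1 => /eqP r1_eq1; move: r_odd; rewrite -(prednK r_gt0) r1_eq1.
Qed.

Lemma a_card_pred : a ^+ (q ^ n).-1 = 1.
Proof. by rewrite -card_stem_f expf_card_pred ?a_neq0. Qed.

Lemma coprime_r_t : coprime r t.
Proof.
rewrite prime_coprime //; apply: contra r_ndvd_pred_qn => r_dvd_t.
by rewrite (dvdn_trans r_dvd_t) // (prim_order_dvd a_prim) a_card_pred.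
Qed.

Lemma b_prim : t.-primitive_root b.
Proof. by rewrite (prim_root_exp_coprime _ a_prim) coprime_r_t. Qed.

Lemma dvdp_comp_Xr p : (f %| p \Po 'X^r) = root (p ^ iota) b.
Proof. by have [_ <- _] := stem_f; rewrite root_map_comp_Xn. Qed.

Lemma dvdp_comp_modXr p : (f %| p \Po ('X^r %% f)) = root (p ^ iota) b.
Proof.
have [_ root_a _] := stem_f.
have /rootP f_a : root (f ^ iota) a by rewrite root_a dvdpp.
have Xr_a : (('X^r %% f) ^ iota).[a] = b.
  have := congr1 (fun p => (p ^ iota).[a]) (divp_eq 'X^r f).
  by rewrite /= rmorphD rmorphM /= hornerD hornerM f_a mulr0 add0r map_polyXn hornerXn.
by rewrite -root_a map_comp_poly /root horner_comp Xr_a.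
Qed.

Lemma root_psi_b : root (psi ^ iota) b.
Proof. by rewrite -dvdp_comp_modXr. Qed.

Lemma psi_irr : irreducible_poly psi.
Proof.
apply/(subfx_irreducibleP root_psi_b (monic_neq0 psi_monic)) => phi phi_b phi_neq0.
have [phi_big | phi_small] := ltnP n.+1 (size phi).
  exact: leq_trans size_psi_le (ltnW phi_big).
have c_neq0 : (lead_coef phi)^-1 != 0 by rewrite invr_eq0 lead_coef_eq0.
rewrite -(size_scale phi c_neq0); apply: psi_min.
- by rewrite monicE lead_coefZ mulVf ?lead_coef_eq0.
- by rewrite size_scale.
- by rewrite dvdp_comp_modXr map_polyZ rootZ ?fmorph_eq0.
Qed.

Lemma size_psi : size psi = n.+1.
Proof.
have [Kp [io [c stem_psi]]] := stem_field_exists psi_irr.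
have d_gt0 := stem_field_deg_gt0 stem_psi.
have b_fixed := stem_field_root_frobenius stem_psi root_psi_b.
have [s rs1] := coprime_modn_inv r_gt0 coprime_r_t.
have bs_a : b ^+ s = a := expr_modn_inv (prim_expr_order a_prim) rs1.
have a_fixed : a ^+ (q ^ (size psi).-1) = a by rewrite -bs_a exprAC b_fixed.
have := stem_field_frobenius_dvd stem_f d_gt0 a_fixed.
rewrite size_f => /(dvdn_leq d_gt0).
by move: size_psi_le d_gt0; case: (size psi) => //= m; lia.
Qed.

Local Notation P := (psi \Po 'X^r).
Local Notation G := (P %/ f).

Lemma f_dvd_P : f %| P.
Proof. by rewrite dvdp_comp_Xr root_psi_b. Qed.

Lemma root_deriv_psi_b : ~~ root (psi^`() ^ iota) b.
Proof.
have psi_gt1 : (1 < size psi)%N by rewrite size_psi ltnS ltnW.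
have dpsi_neq0 : psi^`() != 0.
  by rewrite (separable_deriv_eq0 (irreducible_separable psi_irr) (dvdpp psi)).
rewrite (root_irreducible_dvdp _ psi_irr root_psi_b).
by apply/negP => /(dvdp_leq dpsi_neq0); rewrite leqNgt lt_size_deriv ?monic_neq0.
Qed.

(* Otherwise f^2 divides P, so P' = (psi' \Po 'X^r) * r 'X^(r - 1) vanishes at a,
   whereas psi' does not vanish at b because psi is separable. *)
Lemma f_ndvd_G : ~~ (f %| G).
Proof.
apply/negP => f_dvd_G.
have : f %| P^`() by apply: dvdp_deriv_sq; rewrite -(divpK f_dvd_P) dvdp_mul.
have [_ <- _] := stem_f; apply/negP.
rewrite deriv_comp derivXn rmorphM rootM root_map_comp_Xn negb_or root_deriv_psi_b /=.
rewrite rmorphMn /= map_polyXn /root hornerMn hornerXn -mulr_natr mulf_eq0 negb_or.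
by rewrite expf_neq0 ?a_neq0 // -(rmorph_nat iota) fmorph_eq0 natf_neq0_card.
Qed.

Section FactorOfG.

Variables (L : finFieldType) (io : {rmorphism F -> L}) (c : L) (h : {poly F}).
Hypotheses (h_irr : irreducible_poly h) (h_dvd_G : h %| G).
Hypothesis stem_h : stem_field io c h.

Lemma G_factor_root_psi : root (psi ^ io) (c ^+ r).
Proof.
have [_ root_h _] := stem_h.
by rewrite -root_map_comp_Xn -(divpK f_dvd_P) rmorphM rootM root_h h_dvd_G.
Qed.

Lemma G_factor_conj_b p : root (p ^ io) (c ^+ r) = root (p ^ iota) b.
Proof.
rewrite (root_irreducible_dvdp _ psi_irr G_factor_root_psi).
by rewrite (root_irreducible_dvdp _ psi_irr root_psi_b).
Qed.

Lemma G_factor_exp_prim : t.-primitive_root (c ^+ r).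
Proof.
rewrite (@eq_prim_root_of_unity _ _ t (c ^+ r) b) ?b_prim // => k.
by rewrite -(root_map_Xn_sub1 io) -(root_map_Xn_sub1 iota) G_factor_conj_b.
Qed.

Lemma G_factor_not_root_f : ~~ root (f ^ io) c.
Proof.
have [_ -> _] := stem_h; apply: contra f_ndvd_G => h_dvd_f.
have h_f : h %= f := f_irr h (negbT (gtn_eqF h_irr.1)) h_dvd_f.
by rewrite -(eqp_dvdl _ h_f).
Qed.

(* For r s = 1 mod t, c = (c^r)^s would be a root of f, as a = b^s is. *)
Lemma G_factor_expr_neq1 : c ^+ t != 1.
Proof.
apply/negP => /eqP ct1; have [s rs1] := coprime_modn_inv r_gt0 coprime_r_t.
have := G_factor_conj_b (f \Po 'X^s); rewrite !root_map_comp_Xn.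
rewrite (expr_modn_inv ct1 rs1) (expr_modn_inv (prim_expr_order a_prim) rs1).
have [_ -> _] := stem_f; rewrite dvdpp.
by apply/negP; rewrite G_factor_not_root_f.
Qed.

Lemma G_factor_prim : (r * t).-primitive_root c.
Proof.
have crt1 : c ^+ (r * t) = 1 by rewrite exprM (prim_expr_order G_factor_exp_prim).
have rt_gt0 : (0 < r * t)%N by rewrite muln_gt0 r_gt0 (prim_order_gt0 a_prim).
have [m prim_m _] := prim_order_exists rt_gt0 crt1.
have t_eq := prim_root_order_inj G_factor_exp_prim (exp_prim_root prim_m r).
have [r_dvd_m | r_ndvd_m] := boolP (r %| m)%N.
  by rewrite t_eq (gcdn_idPl r_dvd_m) mulnC divnK.
move: r_ndvd_m G_factor_expr_neq1; rewrite -prime_coprime // /coprime => /eqP r_m1.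
by rewrite t_eq r_m1 divn1 (prim_expr_order prim_m) eqxx.
Qed.

Lemma G_factor_size : ((r.-1 * n).+1 <= size h)%N.
Proof.
have [card_L _ _] := stem_h; set m := (size h).-1.
have m_gt0 : (0 < m)%N := stem_field_deg_gt0 stem_h.
have qm_gt0 : (0 < q ^ m)%N by rewrite expn_gt0 q_gt0.
have c_prim := G_factor_prim.
have c_neq0 : c != 0 by rewrite (prim_root_eq0 c_prim) -lt0n (prim_order_gt0 c_prim).
have rt_dvd : (r * t %| (q ^ m).-1)%N.
  by rewrite (prim_order_dvd c_prim) -card_L expf_card_pred.
have r1_dvd_m : (r.-1 %| m)%N.
  apply: (mult_order_mod_dvdn ord_q); apply/eqP; rewrite -dvdn_pred_eqmod //.
  exact: dvdn_trans (dvdn_mulr _ _) rt_dvd.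
have a_fixed : a ^+ (q ^ m) = a.
  have := dvdn_trans (dvdn_mull r (dvdnn t)) rt_dvd.
  rewrite (prim_order_dvd a_prim) => /eqP am1.
  by rewrite -(prednK qm_gt0) exprS am1 mulr1.
have n_dvd_m : (n %| m)%N.
  by have := stem_field_frobenius_dvd stem_f m_gt0 a_fixed; rewrite size_f.
have : (n * r.-1 %| m)%N by rewrite Gauss_dvd // n_dvd_m.
move/(dvdn_leq m_gt0); rewrite mulnC -ltnS /m prednK //.
exact: ltnW h_irr.1.
Qed.

End FactorOfG.

Lemma size_G : size G = (r.-1 * n).+1.
Proof.
have := size_comp_poly psi 'X^r; rewrite size_psi size_polyXn /=.
rewrite size_divp ?irredp_neq0 // size_f /= -subn1.
by case: (size P) => [|k] /= k_eq; move: k_eq n_gt1 r_gt0; nia.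
Qed.

Lemma G_irr : irreducible_poly G.
Proof.
have r1_gt0 : (0 < r.-1)%N by rewrite -ltnS prednK ?prime_gt1.
have G_neq0 : G != 0 by rewrite -size_poly_gt0 size_G.
split=> [|g g_size g_dvd_G]; first by rewrite size_G ltnS muln_gt0 r1_gt0 ltnW.
have g_neq0 : g != 0 by apply: contraNneq G_neq0 => g0; rewrite -dvd0p -g0.
have g_gt1 : (1 < size g)%N by rewrite ltn_neqAle eq_sym g_size size_poly_gt0.
have [h h_irr h_dvd_g] := irreducible_factor g_gt1.
have [L [io [c stem_h]]] := stem_field_exists h_irr.
have := G_factor_size h_irr (dvdp_trans h_dvd_g g_dvd_G) stem_h.
rewrite -size_G => G_le_h.
by rewrite -dvdp_size_eqp // eqn_leq dvdp_leq //= (leq_trans G_le_h) // dvdp_leq.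
Qed.

Lemma G_order : is_poly_order G (r * t).
Proof.
have [L [io [c stem_G]]] := stem_field_exists G_irr.
exact/(stem_field_poly_order stem_G)/(G_factor_prim G_irr (dvdpp G) stem_G).
Qed.

Lemma theorem5_stem_field :
  [/\ irreducible_poly psi, size psi = n.+1 & f %| P] /\
  [/\ irreducible_poly G, size G = (r.-1 * n).+1 & is_poly_order G (r * t)].
Proof.
split; split; [exact: psi_irr | exact: size_psi | exact: f_dvd_P |
  exact: G_irr | exact: size_G | exact: G_order].
Qed.

End Theorem5.

Theorem mainTheorem5 (F : finFieldType) (r n t : nat) (f psi : {poly F}) :
  prime r -> odd r -> ~~ (r %| #|F|)%N ->
  is_mult_order_mod #|F| r r.-1 ->
  (1 < n)%N -> coprime n r.-1 ->
  f \is monic -> irreducible_poly f -> size f = n.+1 ->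
  is_poly_order f t ->
  psi \is monic -> (size psi <= n.+1)%N ->
  f %| psi \Po ('X^r %% f) ->
  (forall phi : {poly F}, phi \is monic -> (size phi <= n.+1)%N ->
     f %| phi \Po ('X^r %% f) -> (size psi <= size phi)%N) ->
  [/\ irreducible_poly psi, size psi = n.+1 &
      f %| psi \Po 'X^r] /\
  [/\
      irreducible_poly ((psi \Po 'X^r) %/ f),
      size ((psi \Po 'X^r) %/ f) = ((r.-1 * n).+1)%N
    & is_poly_order ((psi \Po 'X^r) %/ f) (r * t)].
Proof.
(* f need not be monic. *)
move=> r_prime r_odd r_ndvd_q ord_q n_gt1 co_n_r1 _ f_irr size_f ord_f.
have [K [iota [a stem_f]]] := stem_field_exists f_irr.
exact: (theorem5_stem_field r_prime r_odd r_ndvd_q ord_q n_gt1 co_n_r1 f_irr size_f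
  ord_f stem_f).
Qed.
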